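(* Let $\Gamma$ be a finitely generated discrete group with finite symmetric generating set $Q$, let $Z\subseteq\mathrm{Sub}(\Gamma)$ be a uniformly recurrent subgroup, and let $H\in Z$. If $Z$ is generic, then the groupoid $\mathcal{G}_H$ is principal.
   Context: Word length $l(\gamma)$ is taken with respect to $Q$. $\mathrm{Sub}(\Gamma)$ is the space of subgroups of $\Gamma$ with the topology of pointwise convergence of indicator functions, with $\Gamma$ acting by conjugation $\gamma.H=\gamma H\gamma^{-1}$. A uniformly recurrent subgroup (URS) is a nonempty closed $\Gamma$-invariant subset $Z\subseteq\mathrm{Sub}(\Gamma)$ on which every $\Gamma$-orbit is dense. $Z$ is generic if for every $H'\in Z$ the stabiliser $\{\gamma\in\Gamma:\gamma H'\gamma^{-1}=H'\}$ equals $H'$. A groupoid is principal if every arrow whose range equals its source is a unit. For $H\le\Gamma$, the Schreier graph $S(H)$ is the rooted labeled graph with vertex set $\Gamma/H$, root $H$, and for each $\gamma H$ and $q\in Q$ an edge from $\gamma H$ to $q\gamma H$ labeled $q$; $B_n(S,p)$ is the ball of radius $n$ (path metric) around $p$; root-label isomorphism means graph isomorphism preserving roots and labels. The groupoid $\mathcal{G}_H$: write $S=S(H)$. For $p\in\Gamma/H$, $n\ge0$ let $[p]_n$ be the root-label isomorphism class of $(B_n(S,p),p)$; $E_n=\{[p]_n\}$ with maps $[p]_{n+1}\mapsto[p]_n$; $\mathcal{G}_H^0=\varprojlim E_n$. For $x=(x_n)\in\mathcal{G}_H^0$ choose $p_n$ with $x_n=[p_n]_n$. Arrows are classes of pairs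 $(x,\gamma)$, $x\in\mathcal{G}_H^0$, $\gamma\in\Gamma$, with $(x,\gamma)\sim(x,\gamma')$ iff $\gamma p_n=\gamma'p_n$ for all large $n$. Range $r(x,\gamma)=x$, source $\gamma.x$ with $(\gamma.x)_n=[\gamma p_{n+l(\gamma)}]_n$, product $(x,\gamma')(\gamma'.x,\gamma)=(x,\gamma\gamma')$, inverse $(\gamma.x,\gamma^{-1})$, units $(x,e)$. *)

From Stdlib Require Import List Arith ClassicalEpsilon.
Import ListNotations.

Set Implicit Arguments.

Record group := Group {
  carrier :> Type;
  mul : carrier -> carrier -> carrier;
  one : carrier;
  inv : carrier -> carrier;
  mulA : forall x y z, mul x (mul y z) = mul (mul x y) z;
  mul1g : forall x, mul one x = x;
  mulg1 : forall x, mul x one = x;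
  mulVg : forall x, mul (inv x) x = one;
  mulgV : forall x, mul x (inv x) = one
}.

Arguments mul {g}.
Arguments one {g}.
Arguments inv {g}.

Section Defs.
Context {G : group}.

Definition wprod (w : list G) : G := fold_right mul one w.

Definition word_in (Q : list G) (w : list G) : Prop := Forall (fun s => In s Q) w.

Definition symmetric_set (Q : list G) : Prop := forall q, In q Q -> In (inv q) Q.
Definition generates (Q : list G) : Prop :=
  forall g : G, exists w, word_in Q w /\ wprod w = g.

Definition is_word_length (Q : list G) (g : G) (k : nat) : Prop :=
  (exists w, word_in Q w /\ wprod w = g /\ length w = k) /\
  (forall w, word_in Q w -> wprod w = g -> k <= length w).
Definition word_length (Q : list G) (g : G) : nat :=
  epsilon (inhabits 0) (is_word_length Q g).

Definition is_subgroup (H : G -> Prop) : Prop :=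
  H one /\ (forall x y, H x -> H y -> H (mul x y)) /\ (forall x, H x -> H (inv x)).

(* conjugation action  g.H = g H g^-1 :  x in gHg^-1  <->  g^-1 x g in H *)
Definition conjsub (g : G) (H : G -> Prop) : G -> Prop :=
  fun x => H (mul (mul (inv g) x) g).

Definition sub_eq (H K : G -> Prop) : Prop := forall x, H x <-> K x.

(* H and K agree on the finite set F (basic neighbourhoods of the topology
   of pointwise convergence of indicator functions) *)
Definition agree_on (F : list G) (H K : G -> Prop) : Prop :=
  forall x, In x F -> (H x <-> K x).

Definition URS (Z : (G -> Prop) -> Prop) : Prop :=
  (forall K, Z K -> is_subgroup K) /\
  (exists K, Z K) /\
  (* closed in Sub(Gamma) for the topology of pointwise convergence *)
  (forall K, is_subgroup K ->
     (forall F : list G, exists K', Z K' /\ agree_on F K' K) -> Z K) /\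
  (forall g K, Z K -> Z (conjsub g K)) /\
  (* every orbit is dense in Z *)
  (forall H' K, Z H' -> Z K ->
     forall F : list G, exists g, agree_on F (conjsub g H') K).

(* Z is generic: the stabiliser of every H' in Z is H' itself *)
Definition generic_URS (Z : (G -> Prop) -> Prop) : Prop :=
  forall H', Z H' -> forall g : G, sub_eq (conjsub g H') H' <-> H' g.

(* vertices gH; aH = bH  <->  a^-1 b in H *)
Definition coset_eq (H : G -> Prop) (a b : G) : Prop := H (mul (inv a) b).

(* path metric: the vertex uH is at distance <= n from aH.  An (undirected)
   step along an edge labelled q goes from v to qv or from qv to v. *)
Definition step_elt (Q : list G) (s : G) : Prop := In s Q \/ In (inv s) Q.
Definition in_ball (Q : list G) (H : G -> Prop) (n : nat) (a u : G) : Prop :=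
  exists w, Forall (step_elt Q) w /\ length w <= n /\ coset_eq H (mul (wprod w) a) u.

(* (B_n(S,aH), aH) and (B_n(S,bH), bH) are root-label isomorphic
   (balls are induced labelled subgraphs; an edge from uH to q uH labelled q) *)
Definition ball_iso (Q : list G) (H : G -> Prop) (n : nat) (a b : G) : Prop :=
  exists phi : G -> G,
    coset_eq H (phi a) b /\
    (forall u, in_ball Q H n a u -> in_ball Q H n b (phi u)) /\
    (forall u u', in_ball Q H n a u -> in_ball Q H n a u' ->
       (coset_eq H u u' <-> coset_eq H (phi u) (phi u'))) /\
    (forall v, in_ball Q H n b v -> exists u, in_ball Q H n a u /\ coset_eq H (phi u) v) /\
    (forall u v q, in_ball Q H n a u -> in_ball Q H n a v -> In q Q ->
       (coset_eq H (mul q u) v <-> coset_eq H (mul q (phi u)) (phi v))).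

(* A point x = (x_n) of G_H^0 = lim E_n is given by a sequence of coset
   representatives p_n with x_n = [p_n H]_n; compatibility [p_{n+1}]_n = [p_n]_n. *)
Definition unit_point (Q : list G) (H : G -> Prop) (p : nat -> G) : Prop :=
  forall n, ball_iso Q H n (p (S n)) (p n).

Definition unit_eq (Q : list G) (H : G -> Prop) (p p' : nat -> G) : Prop :=
  forall n, ball_iso Q H n (p n) (p' n).

(* source of the arrow (x,gamma): (gamma.x)_n = [gamma p_{n + l(gamma)}]_n *)
Definition arrow_source (Q : list G) (gamma : G) (p : nat -> G) : nat -> G :=
  fun n => mul gamma (p (n + word_length Q gamma)).

Definition arrow_equiv (H : G -> Prop) (p : nat -> G) (gamma gamma' : G) : Prop :=
  exists N, forall n, N <= n -> coset_eq H (mul gamma (p n)) (mul gamma' (p n)).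

(* G_H is principal: every arrow (x,gamma) whose range x equals its source
   gamma.x is a unit, i.e. equivalent to (x,e). *)
Definition GH_principal (Q : list G) (H : G -> Prop) : Prop :=
  forall p : nat -> G, unit_point Q H p ->
  forall gamma : G, unit_eq Q H p (arrow_source Q gamma p) ->
  arrow_equiv H p gamma one.

End Defs.

(* The vertex stabilisers p_n H p_n^-1 along a point x = ([p_n]_n) of the
   unit space converge in Sub(Gamma): a root-label isomorphism of n-balls
   decides which words of length <= n fix the root, so each element is
   eventually always in or always out.  The limit K lies in Z, being a limit
   of conjugates of H.  If the arrow (x, gamma) has source x, the balls around
   p_n and gamma p_(n + l(gamma)) agree, so gamma normalises K; genericity
   puts gamma in K, i.e. gamma fixes p_n H for all large n, and (x, gamma) is
   the unit (x, e). *)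
From Stdlib Require Import List Lia.

Arguments mulA {g}. Arguments mul1g {g}. Arguments mulg1 {g}.
Arguments mulVg {g}. Arguments mulgV {g}.

Section GroupFacts.
Context {G : group}.

Lemma inv_unique (x y : G) : mul x y = one -> y = inv x.
Proof.
  intro Exy.
  rewrite <- (mul1g y), <- (mulVg x), <- mulA, Exy, mulg1.
  reflexivity.
Qed.

Lemma invM (x y : G) : inv (mul x y) = mul (inv y) (inv x).
Proof.
  symmetry; apply inv_unique.
  rewrite mulA, <- (mulA x y), mulgV, mulg1, mulgV.
  reflexivity.
Qed.

Lemma invgK (x : G) : inv (inv x) = x.
Proof. symmetry; apply inv_unique, mulVg. Qed.

Lemma conjsub_mul (g b : G) (H : G -> Prop) (x : G) :
  conjsub (mul g b) H x <-> conjsub g (conjsub b H) x.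
Proof.
  unfold conjsub.
  rewrite invM, <- !mulA.
  reflexivity.
Qed.

Lemma conjsub_coset_eq (H : G -> Prop) (a g : G) :
  conjsub a H g <-> coset_eq H a (mul g a).
Proof. unfold conjsub, coset_eq; rewrite mulA; reflexivity. Qed.

End GroupFacts.

Section Cosets.
Context {G : group}.
Variable H : G -> Prop.
Hypothesis H_subgroup : is_subgroup H.

Lemma coset_eq_refl (a : G) : coset_eq H a a.
Proof. unfold coset_eq; rewrite mulVg; apply H_subgroup. Qed.

Lemma coset_eq_of_eq (a b : G) : a = b -> coset_eq H a b.
Proof. intros ->; apply coset_eq_refl. Qed.

Lemma coset_eq_sym (a b : G) : coset_eq H a b -> coset_eq H b a.
Proof.
  unfold coset_eq; intro Hab.
  destruct H_subgroup as [_ [_ H_inv]].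
  apply H_inv in Hab; rewrite invM, invgK in Hab.
  exact Hab.
Qed.

Lemma coset_eq_trans (a b c : G) :
  coset_eq H a b -> coset_eq H b c -> coset_eq H a c.
Proof.
  unfold coset_eq; intros Hab Hbc.
  destruct H_subgroup as [_ [H_mul _]].
  pose proof (H_mul _ _ Hab Hbc) as Hac.
  rewrite <- mulA, (mulA b), mulgV, mul1g in Hac.
  exact Hac.
Qed.

Lemma coset_eq_mul2l (q x y : G) :
  coset_eq H (mul q x) (mul q y) <-> coset_eq H x y.
Proof.
  unfold coset_eq.
  rewrite invM, <- mulA, (mulA (inv q)), mulVg, mul1g.
  reflexivity.
Qed.

Lemma conjsub_subgroup (a : G) : is_subgroup (conjsub a H).
Proof.
  destruct H_subgroup as [H_one [H_mul H_inv]]; unfold conjsub.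
  split; [|split].
  - rewrite mulg1, mulVg; exact H_one.
  - intros x y Hx Hy.
    replace (mul (mul (inv a) (mul x y)) a)
      with (mul (mul (mul (inv a) x) a) (mul (mul (inv a) y) a)).
    + apply H_mul; assumption.
    + rewrite !mulA, <- (mulA _ a (inv a)), mulgV, mulg1; reflexivity.
  - intros x Hx.
    replace (mul (mul (inv a) (inv x)) a) with (inv (mul (mul (inv a) x) a)).
    + apply H_inv; assumption.
    + rewrite !invM, invgK, mulA; reflexivity.
Qed.

Section BallIsomorphism.
Variables (Q : list G) (n : nat) (a b : G).

Lemma in_ball_word (w : list G) :
  word_in Q w -> length w <= n -> in_ball Q H n a (mul (wprod w) a).
Proof.
  intros Hw Hlen; exists w; repeat split.
  - eapply Forall_impl; [|exact Hw]; intros s Hs; left; exact Hs.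
  - exact Hlen.
  - apply coset_eq_refl.
Qed.

Lemma ball_iso_word_endpoint (phi : G -> G) (w : list G) :
  coset_eq H (phi a) b ->
  (forall u v q, in_ball Q H n a u -> in_ball Q H n a v -> In q Q ->
     (coset_eq H (mul q u) v <-> coset_eq H (mul q (phi u)) (phi v))) ->
  word_in Q w -> length w <= n ->
  coset_eq H (phi (mul (wprod w) a)) (mul (wprod w) b).
Proof.
  intros Hroot Hedge.
  induction w as [|q w IH]; intros Hw Hlen; simpl in *.
  - rewrite !mul1g; exact Hroot.
  - inversion Hw as [|? ? Hq Hw']; subst.
    assert (Hedge_q : coset_eq H (mul q (phi (mul (wprod w) a)))
                                 (phi (mul (mul q (wprod w)) a))).
    { apply (Hedge (mul (wprod w) a) (mul (mul q (wprod w)) a) q);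
        [apply in_ball_word; [exact Hw'|lia]| |exact Hq|].
      - apply (in_ball_word (q :: w)); [constructor; assumption|simpl; lia].
      - apply coset_eq_of_eq, mulA. }
    rewrite <- (mulA q (wprod w) b).
    apply coset_eq_trans with (mul q (phi (mul (wprod w) a))).
    + apply coset_eq_sym, Hedge_q.
    + apply coset_eq_mul2l, IH; [exact Hw'|lia].
Qed.

Lemma ball_iso_conjsub (w : list G) :
  ball_iso Q H n a b -> word_in Q w -> length w <= n ->
  (conjsub a H (wprod w) <-> conjsub b H (wprod w)).
Proof.
  intros [phi [Hroot [_ [Hinj [_ Hedge]]]]] Hw Hlen.
  pose proof (ball_iso_word_endpoint phi w Hroot Hedge Hw Hlen) as Hend.
  assert (Hroot_in : in_ball Q H n a a).
  { replace a with (mul (wprod nil) a) at 2 by apply mul1g.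
    apply in_ball_word; [constructor|simpl; lia]. }
  rewrite !conjsub_coset_eq, (Hinj _ _ Hroot_in (in_ball_word w Hw Hlen)).
  split; intro Hfix.
  - apply coset_eq_trans with (phi a); [apply coset_eq_sym, Hroot|].
    apply coset_eq_trans with (phi (mul (wprod w) a)); assumption.
  - apply coset_eq_trans with b; [exact Hroot|].
    apply coset_eq_trans with (mul (wprod w) b); [exact Hfix|].
    apply coset_eq_sym, Hend.
Qed.

End BallIsomorphism.
End Cosets.

Definition eventually (P : nat -> Prop) : Prop :=
  exists N, forall n, N <= n -> P n.

Lemma eventually_and (P R : nat -> Prop) :
  eventually P -> eventually R -> eventually (fun n => P n /\ R n).
Proof.
  intros [N1 HP] [N2 HR]; exists (max N1 N2); intros n Hn.
  split; [apply HP|apply HR]; lia.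
Qed.

Section SubgroupLimits.
Context {G : group}.
Variable Hs : nat -> G -> Prop.

Definition liminf_sub : G -> Prop := fun g => eventually (fun n => Hs n g).

Definition stabilizes : Prop :=
  forall g, exists m, forall n, m <= n -> (Hs n g <-> Hs m g).

Definition converges_to (K : G -> Prop) : Prop :=
  forall g, eventually (fun n => Hs n g <-> K g).

Lemma liminf_subgroup :
  (forall n, is_subgroup (Hs n)) -> is_subgroup liminf_sub.
Proof.
  intro Hsub; split; [|split].
  - exists 0; intros n _; apply Hsub.
  - intros x y Hx Hy; destruct (eventually_and _ _ Hx Hy) as [N HN].
    exists N; intros n Hn.
    destruct (Hsub n) as [_ [H_mul _]], (HN n Hn); apply H_mul; assumption.
  - intros x [N HN]; exists N; intros n Hn.
    destruct (Hsub n) as [_ [_ H_inv]]; apply H_inv, HN, Hn.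
Qed.

Lemma stabilizes_converges : stabilizes -> converges_to liminf_sub.
Proof.
  intros Hstab g; destruct (Hstab g) as [m Hm]; exists m; intros n Hn; split.
  - intro Hng; exists m; intros k Hk.
    apply (Hm k Hk), (Hm n Hn), Hng.
  - intros [N HN]; apply (Hm n Hn), (Hm (max N m)); [lia|apply HN; lia].
Qed.

Lemma converges_agree_on (K : G -> Prop) (F : list G) :
  converges_to K -> eventually (fun n => agree_on F (Hs n) K).
Proof.
  intro Hconv; induction F as [|x F IH].
  - exists 0; intros n _ x [].
  - destruct (eventually_and _ _ (Hconv x) IH) as [N HN].
    exists N; intros n Hn; destruct (HN n Hn) as [Hx HF].
    intros y [<-|Hy]; [exact Hx|apply HF, Hy].
Qed.

Lemma URS_closed_limit (Z : (G -> Prop) -> Prop) (K : G -> Prop) :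
  URS Z -> (forall n, Z (Hs n)) -> is_subgroup K -> converges_to K -> Z K.
Proof.
  intros [_ [_ [Zclosed _]]] HZ HK Hconv.
  apply Zclosed; [exact HK|]; intro F.
  destruct (converges_agree_on K F Hconv) as [N HN].
  exists (Hs N); split; [apply HZ|apply HN; lia].
Qed.

End SubgroupLimits.

Section UnitPoints.
Context {G : group}.
Variables (Q : list G) (H : G -> Prop) (p : nat -> G).
Hypotheses (H_subgroup : is_subgroup H) (Q_generates : generates Q).

Definition root_stabilizer (n : nat) : G -> Prop := conjsub (p n) H.

Lemma unit_point_stabilizes : unit_point Q H p -> stabilizes root_stabilizer.
Proof.
  intros Hp g; destruct (Q_generates g) as [w [Hw <-]].
  exists (length w); intros n Hn.
  induction Hn as [|n Hn IH]; [reflexivity|].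
  rewrite <- IH; unfold root_stabilizer.
  apply (ball_iso_conjsub H H_subgroup Q n); [apply Hp|exact Hw|exact Hn].
Qed.

Lemma arrow_source_normalizes (gamma : G) :
  unit_eq Q H p (arrow_source Q gamma p) ->
  converges_to root_stabilizer (liminf_sub root_stabilizer) ->
  sub_eq (conjsub gamma (liminf_sub root_stabilizer)) (liminf_sub root_stabilizer).
Proof.
  set (l := word_length Q gamma).
  intros Hsrc Hconv x; unfold conjsub at 1.
  destruct (Q_generates x) as [w [Hw <-]].
  destruct (Hconv (wprod w)) as [N1 HN1].
  destruct (Hconv (mul (mul (inv gamma) (wprod w)) gamma)) as [N2 HN2].
  set (n := max (length w) (max N1 N2)).
  rewrite <- (HN1 n), <- (HN2 (n + l)) by lia; unfold root_stabilizer.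
  symmetry; apply iff_trans with (conjsub (mul gamma (p (n + l))) H (wprod w)).
  - apply (ball_iso_conjsub H H_subgroup Q n); [apply Hsrc|exact Hw|lia].
  - apply conjsub_mul.
Qed.

End UnitPoints.

Theorem proposition5p1 (Gamma : group) (Q : list Gamma)
  (Z : (Gamma -> Prop) -> Prop) (H : Gamma -> Prop) :
  symmetric_set Q -> generates Q ->
  URS Z -> Z H ->
  generic_URS Z ->
  GH_principal Q H.
Proof.
  intros _ Q_generates HZ ZH Zgeneric p Hp gamma Hsrc.
  assert (H_subgroup : is_subgroup H) by (apply HZ; exact ZH).
  set (stab := root_stabilizer H p); set (K := liminf_sub stab).
  assert (K_subgroup : is_subgroup K)
    by (apply liminf_subgroup; intro n; apply conjsub_subgroup, H_subgroup).
  assert (Hconv : converges_to stab K)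
    by (apply stabilizes_converges, (unit_point_stabilizes Q); assumption).
  assert (ZK : Z K).
  { apply (URS_closed_limit stab); [exact HZ| |exact K_subgroup|exact Hconv].
    intro n; apply HZ, ZH. }
  assert (K_gamma : K gamma)
    by (apply (Zgeneric K ZK), (arrow_source_normalizes Q); assumption).
  destruct K_gamma as [N HN]; exists N; intros n Hn.
  rewrite mul1g; apply coset_eq_sym; [exact H_subgroup|].
  apply conjsub_coset_eq, HN, Hn.
Qed.
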